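(* Let $G$ be an $r$-graph, $\mathcal{P}$ a partition of $E(G)$, and $A,B\subseteq\mathbb{N}$. Suppose that for all $F,H\in\mathcal{M}'$ that are $(A,B)$-mergeable, there exist $F',H'\in\mathcal{P}$ with $F'\subseteq F$, $H'\subseteq H$ such that $F'$ and $H'$ are $(A,B)$-mergeable. Then for every $F\in\mathcal{M}'$ and every $F_0\in\mathcal{M}'$ with $F_0\subseteq F$, there is an ordering $F_1,\dots,F_s$ of the elements of $\mathcal{P}$ contained in $F\setminus F_0$ such that for every $i\in[s]$ the subgraphs $\bigcup_{j=0}^{i-1}F_j$ and $F_i$ are $\{A,B\}$-mergeable (in particular, $\bigcup_{j=0}^iF_j\in\mathcal{M}'$ for every $i$).
   Context: An $r$-graph is an $r$-uniform hypergraph; subgraphs of $G$ are identified with their edge sets, and their vertex sets are the unions of their edges. For an $r$-graph $F$ and distinct vertices $x,y$ (not necessarily in $F$), $C_F(xy)$ is the set of integers $i\geq 0$ for which there exist $i$ distinct edges $X_1,\dots,X_i$ of $F$ with $|\{x,y\}\cup\bigcup_{j=1}^iX_j|\le ri-2i+2$. For $A,B\subseteq\mathbb{N}$, two edge-disjoint subgraphs $F,H\subseteq G$ are $(A,B)$-mergeable (via $uv$) if there is a pair $uv$ with $A\subseteq C_F(uv)$ and $B\subseteq C_H(uv)$; they are $\{A,B\}$-mergeable if $F,H$ are $(A,B)$-mergeable or $H,F$ are $(A,B)$-mergeable. Given a partition $\mathcal{P}$ of $E(G)$, $\mathcal{M}'=\mathcal{M}'_{\{A,B\}}(\mathcal{P})$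 is the smallest family of subgraphs of $G$ containing all elements of $\mathcal{P}$ and closed under taking the union of two $\{A,B\}$-mergeable members (its elements are called partial $\{A,B\}$-clusters; each is a union of elements of $\mathcal{P}$). *)

From mathcomp Require Import all_boot.
Set Implicit Arguments. Unset Strict Implicit. Unset Printing Implicit Defensive.

(* Vertices live in a finite type V; an edge is a {set V}; a (sub)graph is
   identified with its edge set, a {set {set V}}. *)

Definition is_rgraph (V : finType) (r : nat) (G : {set {set V}}) : Prop :=
  forall e, e \in G -> #|e| = r.

(* i \in C_F(xy): there are i distinct edges X_1..X_i of F with
   |{x,y} u X_1 u ... u X_i| <= r*i - 2*i + 2 (stated additively in nat). *)
Definition inC (V : finType) (r : nat) (F : {set {set V}}) (x y : V) (i : nat)
  : Prop :=
  exists S : {set {set V}},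
    [/\ S \subset F, #|S| = i &
        #|[set x; y] :|: \bigcup_(X in S) X| + 2 * i <= r * i + 2].

Definition mergeable (V : finType) (r : nat) (G : {set {set V}})
  (A B : nat -> Prop) (F H : {set {set V}}) : Prop :=
  [/\ F \subset G, H \subset G, [disjoint F & H] &
      exists u v : V, u != v /\
        (forall i, A i -> inC r F u v i) /\ (forall i, B i -> inC r H u v i)].

Definition mergeable2 (V : finType) (r : nat) (G : {set {set V}})
  (A B : nat -> Prop) (F H : {set {set V}}) : Prop :=
  mergeable r G A B F H \/ mergeable r G A B H F.

(* Partial {A,B}-clusters M'_{A,B}(P): the smallest family containing P and
   closed under unions of two {A,B}-mergeable members. *)
Inductive partial_cluster (V : finType) (r : nat) (G : {set {set V}})
  (P : {set {set {set V}}}) (A B : nat -> Prop) : {set {set V}} -> Prop :=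
| pc_base F : F \in P -> partial_cluster r G P A B F
| pc_merge F H : partial_cluster r G P A B F -> partial_cluster r G P A B H ->
    mergeable2 r G A B F H -> partial_cluster r G P A B (F :|: H).

From mathcomp Require Import all_boot.
Set Implicit Arguments. Unset Strict Implicit. Unset Printing Implicit Defensive.

(* Grow F0 one block of P at a time.  If a partial cluster K is a proper
   subcluster of a partial cluster F, then some subcluster H of F is disjoint
   from K and {A,B}-mergeable with it: following the construction of F, a
   union F1 :|: F2 that meets K without being inside it either has a part
   doing the same, or has one part inside K and the other disjoint from it,
   and then K inherits the merging pair because C_F(uv) only grows with F.
   The hypothesis shrinks this merge to two blocks; the block on K's side is
   widened back to K, and the block in H is the next term of the ordering. *)

Lemma disjointsUl (T : finType) (A B C : {set T}) :
  [disjoint A :|: B & C] = [disjoint A & C] && [disjoint B & C].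
Proof. by rewrite !disjoints_subset subUset. Qed.

Section Mergeable.

Variables (V : finType) (r : nat) (G : {set {set V}}) (A B : nat -> Prop).

Lemma inC_subset (F F' : {set {set V}}) u v i :
  F \subset F' -> inC r F u v i -> inC r F' u v i.
Proof.
by move=> sFF' [S [sSF cardS bound]]; exists S; split; first exact: subset_trans sFF'.
Qed.

Lemma mergeable_widenl (F K H : {set {set V}}) :
  mergeable r G A B F H -> F \subset K -> K \subset G -> [disjoint K & H] ->
  mergeable r G A B K H.
Proof.
move=> [_ sHG _ [u [v [uv [inA inB]]]]] sFK sKG dKH; split=> //.
by exists u, v; split=> //; split=> // i /inA; apply: inC_subset.
Qed.

Lemma mergeable_widenr (F K H : {set {set V}}) :
  mergeable r G A B H F -> F \subset K -> K \subset G -> [disjoint H & K] ->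
  mergeable r G A B H K.
Proof.
move=> [sHG _ _ [u [v [uv [inA inB]]]]] sFK sKG dHK; split=> //.
by exists u, v; split=> //; split=> // i /inB; apply: inC_subset.
Qed.

Lemma mergeable2_sym (F H : {set {set V}}) :
  mergeable2 r G A B F H -> mergeable2 r G A B H F.
Proof. by case; [right | left]. Qed.

Lemma mergeable2_widen (F K H : {set {set V}}) :
  mergeable2 r G A B F H -> F \subset K -> K \subset G -> [disjoint K & H] ->
  mergeable2 r G A B K H.
Proof.
move=> [mFH | mHF] sFK sKG dKH; first by left; apply: mergeable_widenl mFH _ _ _.
by right; apply: mergeable_widenr mHF _ _ _; rewrite // disjoint_sym.
Qed.

End Mergeable.

Section PartialClusters.

Variables (V : finType) (r : nat) (G : {set {set V}}).
Variables (P : {set {set {set V}}}) (A B : nat -> Prop).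
Hypothesis partP : partition P G.

Local Notation cluster := (partial_cluster r G P A B).

Lemma block_neq0 X : X \in P -> X != set0.
Proof. by case/and3P: partP => _ _ P0 XP; apply: contraNneq P0 => <-. Qed.

Lemma cluster_subset F : cluster F -> F \subset G.
Proof.
elim=> [X XP | F1 F2 _ sF1 _ sF2 _]; last by rewrite subUset sF1 sF2.
by case/and3P: partP => /eqP <- _ _; apply: bigcup_sup.
Qed.

Lemma cluster_neq0 F : cluster F -> F != set0.
Proof.
elim=> [X XP | F1 F2 _ nF1 _ _ _]; first exact: block_neq0.
by rewrite -!card_gt0 in nF1 *; apply: leq_trans nF1 (subset_leq_card (subsetUl _ _)).
Qed.

Lemma block_subset_or_disjoint (X K : {set {set V}}) :
  X \in P -> cluster K -> X \subset K \/ [disjoint X & K].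
Proof.
move=> XP; elim=> [Y YP | F1 F2 _ [sX1 | dX1] _ [sX2 | dX2] _].
- have [-> | neXY] := eqVneq X Y; [by left | right].
  by case/and3P: partP => _ /trivIsetP/(_ X Y XP YP neXY).
- by left; rewrite (subset_trans sX1) ?subsetUl.
- by left; rewrite (subset_trans sX1) ?subsetUl.
- by left; rewrite (subset_trans sX2) ?subsetUr.
- by right; rewrite disjoint_sym disjointsUl -!(disjoint_sym X) dX1 dX2.
Qed.

Definition merge_part (K F : {set {set V}}) :=
  exists H, [/\ cluster H, H \subset F, [disjoint H & K] &
                mergeable2 r G A B K H].

Lemma merge_partS (K F F' : {set {set V}}) :
  F \subset F' -> merge_part K F -> merge_part K F'.
Proof.
by move=> sFF' [H [cH sHF dHK mKH]]; exists H; split=> //; apply: subset_trans sFF'.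
Qed.

Lemma cluster_trichotomy (K F : {set {set V}}) : cluster K -> cluster F ->
  [\/ F \subset K, [disjoint F & K] | merge_part K F].
Proof.
move=> cK; have sKG := cluster_subset cK.
elim=> [X XP | F1 F2 c1 IH1 c2 IH2 m12].
  by case: (block_subset_or_disjoint XP cK) => ?; [constructor 1 | constructor 2].
case: IH1 => [s1 | d1 | /(merge_partS (subsetUl F1 F2)) ?]; last by constructor 3.
- case: IH2 => [s2 | d2 | /(merge_partS (subsetUr F1 F2)) ?]; last by constructor 3.
  + by constructor 1; rewrite subUset s1 s2.
  + constructor 3; exists F2; split; rewrite ?subsetUr //.
    by apply: mergeable2_widen m12 s1 sKG _; rewrite disjoint_sym.
- case: IH2 => [s2 | d2 | /(merge_partS (subsetUr F1 F2)) ?]; last by constructor 3.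
  + constructor 3; exists F1; split; rewrite ?subsetUl //.
    by apply: mergeable2_widen (mergeable2_sym m12) s2 sKG _; rewrite disjoint_sym.
  + by constructor 2; rewrite disjointsUl d1 d2.
Qed.

Definition merge_ordering (F0 F : {set {set V}}) (s : seq {set {set V}}) :=
  [/\ uniq s,
      (forall X, X \in s <-> (X \in P /\ X \subset F :\: F0)) &
      forall i, i < size s ->
        mergeable2 r G A B (F0 :|: \bigcup_(X <- take i s) X) (nth set0 s i)].

Lemma merge_ordering_nil (K F : {set {set V}}) :
  F \subset K -> merge_ordering K F [::].
Proof.
move=> sFK; split=> // X; split=> // [[XP]].
have /eqP -> : F :\: K == set0 by rewrite setD_eq0.
by rewrite subset0 (negbTE (block_neq0 XP)).
Qed.

Lemma merge_ordering_cons (K F X : {set {set V}}) s :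
  X \in P -> X \subset F :\: K -> mergeable2 r G A B K X ->
  merge_ordering (K :|: X) F s -> merge_ordering K F (X :: s).
Proof.
move=> XP sX mKX [uniq_s mem_s merge_s]; split.
- rewrite /= uniq_s andbT; apply/negP => /mem_s [_].
  rewrite subsetD disjoint_sym disjointsUl => /and3P [_ _].
  by rewrite -setI_eq0 setIid; apply/negP; apply: block_neq0.
- move=> Y; rewrite in_cons; split.
    case/orP => [/eqP -> // | /mem_s [YP sY]]; split=> //.
    by apply: subset_trans sY (setDS _ (subsetUl _ _)).
  move=> [YP sY]; have [-> // | neYX] := eqVneq Y X.
  apply/orP; right; apply/mem_s; split=> //.
  rewrite -setDDl subsetD sY.
  by case/and3P: partP => _ /trivIsetP /(_ Y X YP XP neYX).
- by case=> [_ | i lt_i]; rewrite /= ?big_nil ?setU0 // big_cons setUA; apply: merge_s.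
Qed.

Hypothesis merge_blocks : forall F H, cluster F -> cluster H ->
  mergeable r G A B F H ->
  exists F' H', [/\ F' \in P, H' \in P, F' \subset F, H' \subset H &
                    mergeable r G A B F' H'].

Lemma merge_part_block (K H : {set {set V}}) :
  cluster K -> cluster H -> [disjoint H & K] -> mergeable2 r G A B K H ->
  exists2 X, X \in P & X \subset H /\ mergeable2 r G A B K X.
Proof.
move=> cK cH dHK mKH; have sKG := cluster_subset cK.
case: mKH => [mKH | mHK].
  have [K' [X [_ XP sK'K sXH mK'X]]] := merge_blocks cK cH mKH.
  exists X => //; split=> //; left; apply: mergeable_widenl mK'X sK'K sKG _.
  by rewrite disjoint_sym (disjointWl sXH).
have [X [K' [XP _ sXH sK'K mXK']]] := merge_blocks cH cK mHK.
exists X => //; split=> //; right; apply: mergeable_widenr mXK' sK'K sKG _.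
exact: disjointWl sXH dHK.
Qed.

Lemma proper_subcluster_block (K F : {set {set V}}) :
  cluster K -> cluster F -> K \subset F -> ~~ (F \subset K) ->
  exists X, [/\ X \in P, X \subset F :\: K & mergeable2 r G A B K X].
Proof.
move=> cK cF sKF nsFK.
case: (cluster_trichotomy cK cF) => [sFK | dFK | [H [cH sHF dHK mKH]]].
- by rewrite sFK in nsFK.
- have := cluster_neq0 cK; rewrite -subset0.
  by rewrite -(disjoint_setI0 dFK) subsetI sKF subxx.
have [X XP [sXH mKX]] := merge_part_block cK cH dHK mKH.
by exists X; rewrite subsetD (subset_trans sXH sHF) (disjointWl sXH dHK).
Qed.

Lemma merge_ordering_exists (K F : {set {set V}}) :
  cluster K -> cluster F -> K \subset F -> exists s, merge_ordering K F s.
Proof.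
move=> + cF; have [n] := ubnP #|F :\: K|; elim: n K => // n IH K lt_n cK sKF.
have [sFK | nsFK] := boolP (F \subset K); first by exists [::]; apply: merge_ordering_nil.
have [X [XP sX mKX]] := proper_subcluster_block cK cF sKF nsFK.
have cKX : cluster (K :|: X) by apply: pc_merge => //; apply: pc_base.
have sKXF : K :|: X \subset F by rewrite subUset sKF (subset_trans sX (subsetDl _ _)).
have X_gt0 : 0 < #|X| by rewrite card_gt0 block_neq0.
have shrink : #|F :\: (K :|: X)| < n.
  rewrite -setDDl cardsDS // -ltnS (leq_trans _ lt_n) // ltnS ltn_subrL X_gt0.
  exact: leq_trans X_gt0 (subset_leq_card sX).
have [s ord_s] := IH _ shrink cKX sKXF.
by exists (X :: s); apply: merge_ordering_cons.
Qed.

End PartialClusters.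

Theorem lemma5p2 (V : finType) (r : nat) (G : {set {set V}})
  (P : {set {set {set V}}}) (A B : nat -> Prop) :
  is_rgraph r G ->
  partition P G ->
  (forall F H, partial_cluster r G P A B F -> partial_cluster r G P A B H ->
     mergeable r G A B F H ->
     exists F' H', [/\ F' \in P, H' \in P, F' \subset F, H' \subset H &
                      mergeable r G A B F' H']) ->
  forall F F0, partial_cluster r G P A B F -> partial_cluster r G P A B F0 ->
    F0 \subset F ->
    exists s : seq {set {set V}},
      [/\ uniq s,
          (forall X, X \in s <-> (X \in P /\ X \subset F :\: F0)) &
          forall i, i < size s ->
            mergeable2 r G A B
              (F0 :|: \bigcup_(X <- take i s) X) (nth set0 s i)].
Proof.
move=> _ partP merge_blocks F F0 cF cF0 sF0F.
exact: merge_ordering_exists partP merge_blocks F0 F cF0 cF sF0F.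
Qed.
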